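(* Let $n$ be a positive integer and for $i\in\{1,\dots,n\}$ let $G_i$ be a finite group equal to a semidirect product $N_i\rtimes H_i$ with $N_i\ne\{1\}$, such that: (1) $N_i\setminus\{1\}$ is a single conjugacy class of $G_i$ for every $i$; (2) $C_{N_i}(h)=\{1\}$ for all $h\in H_i\setminus\{1\}$ and every $i$; (3) $\prod_{i=1}^n H_i$ is MP. Then $\prod_{i=1}^n G_i$ is MP.
   Context: A group $G$ has the Magnus Property (MP) if whenever $x,y\in G$ have the same normal closure in $G$, $x$ is conjugate in $G$ to $y$ or to $y^{-1}$. $C_N(h)$ denotes the centralizer of $h$ in $N$. *)

From mathcomp Require Import all_boot all_fingroup all_solvable.
Set Implicit Arguments. Unset Strict Implicit. Unset Printing Implicit Defensive.

Open Scope group_scope.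

Definition MP (gT : finGroupType) (G : {set gT}) : Prop :=
  forall x y, x \in G -> y \in G ->
    <<x ^: G>> = <<y ^: G>> ->
    exists2 g, g \in G & (x ^ g = y \/ x ^ g = y^-1).

From mathcomp Require Import all_boot all_fingroup all_solvable.

(* With NN generated by the N i, GG = NN ><| HH, and the projection
   remgr NN HH onto HH carries normal closures in GG to normal closures in
   HH. By the Magnus property of HH we may thus conjugate x until its
   HH-component equals that of y or of y^-1; it remains to conjugate x to y
   when they have the same normal closure and the same HH-component. This is
   done coordinatewise in the G i = N i ><| H i, and the conjugating
   coordinates assemble into an element of GG: if the common H i-component h
   is nontrivial, 'C_(N i)[h] = 1 makes N i :* h a single N i-class; if h = 1,
   both coordinates lie in N i, and the normal closures force them to be both
   trivial or both in the class (N i)^#. *)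

Set Implicit Arguments.
Unset Strict Implicit.
Unset Printing Implicit Defensive.

Lemma gen_class_trivg (gT : finGroupType) (G : {group gT}) x :
  (<<x ^: G>> == 1) = (x == 1).
Proof. by rewrite -subG1 gen_subG class_sub_norm ?norms1 // inE. Qed.

Lemma gen_classV (gT : finGroupType) (G : {group gT}) x :
  <<x^-1 ^: G>> = <<x ^: G>>.
Proof. by rewrite classVg genV. Qed.

Lemma morphim_gen_class (aT rT : finGroupType) (D G : {group aT})
    (f : {morphism D >-> rT}) x :
  x \in G -> G \subset D -> f @* <<x ^: G>> = <<f x ^: f @* G>>.
Proof.
move=> Gx sGD.
by rewrite morphim_gen ?class_subG ?morphim_class ?(subsetP sGD).
Qed.

Lemma sdprod_class_rcoset (gT : finGroupType) (N H G : {group gT}) h :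
  N ><| H = G -> h \in H -> 'C_N[h] = 1 -> h ^: N = N :* h.
Proof.
move=> defG Hh regNh; have [_ _ _ nNH _] := sdprod_context defG.
have sub_hN : h ^: N \subset N :* h.
  apply/subsetP=> _ /imsetP[a Na ->]; rewrite mem_rcoset.
  have -> : h ^ a * h^-1 = a^-1 * a ^ h^-1 by rewrite /conjg invgK !mulgA.
  by rewrite groupM ?groupV // memJ_norm // groupV (subsetP nNH).
apply/eqP; rewrite eqEcard sub_hN card_rcoset -index_cent1 regNh indexg1.
exact: leqnn.
Qed.

Lemma sdprod_class_eq_remgr (gT : finGroupType) (N H G : {group gT}) u v :
    N ><| H = G -> N^# \in classes G -> {in H^#, forall h, 'C_N[h] = 1} ->
    u \in G -> v \in G -> remgr N H u = remgr N H v -> (u == 1) = (v == 1) ->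
  v \in u ^: G.
Proof.
move=> defG clN regH Gu Gv eq_uv eq1_uv.
have [/normal_sub sNG _ mulNH _ _] := sdprod_context defG.
suff [z uz vz] : exists2 z, u \in z ^: G & v \in z ^: G.
  by apply: class_trans vz _; rewrite class_sym.
set h := remgr N H u.
have Nhu : u \in N :* h by rewrite mem_rcoset mem_divgr ?mulNH.
have Nhv : v \in N :* h by rewrite /h eq_uv mem_rcoset mem_divgr ?mulNH.
have [h1 | nth] := eqVneq h 1.
  rewrite h1 rcoset1 in Nhu Nhv.
  have [u1 | ntu] := eqVneq u 1.
    have v1 : v = 1 by apply/eqP; rewrite -eq1_uv u1.
    by exists u; rewrite ?v1 -?u1 class_refl.
  have [z _ defN] := imsetP clN.
  by exists z; rewrite -defN !inE ?Nhu ?Nhv -?eq1_uv ntu.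
have Hh : h \in H by rewrite mem_remgr ?mulNH.
have Hh1 : h \in H^# by rewrite !inE nth.
rewrite -(sdprod_class_rcoset defG Hh (regH h Hh1)) in Nhu Nhv.
by exists h; apply: subsetP (classS h sNG) _ _.
Qed.

Section BigdprodCoordinates.

Variables (gT : finGroupType) (I : finType).
Variables (G : I -> {group gT}) (GG : {group gT}).
Hypothesis defGG : \big[dprod/1]_i G i = GG.

Definition bigdprod_compl i := <<\bigcup_(j | j != i) G j>>.

Definition bigdprod_coord i := remgr (bigdprod_compl i) (G i).

Lemma bigdprod_complP i : G i \x bigdprod_compl i = GG.
Proof.
have := defGG; rewrite (bigD1 i) //= => defG_i.
have [[_ K _ defK] _ _ _] := dprodP defG_i.
by rewrite /bigdprod_compl (bigdprodWY defK) -defK.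
Qed.

Lemma bigdprod_sub i : G i \subset GG.
Proof. by rewrite -(dprodW (bigdprod_complP i)) mulG_subl. Qed.

Lemma sub_bigdprod_compl i j : j != i -> G j \subset bigdprod_compl i.
Proof. by move=> neq_ji; apply: sub_gen; apply: (bigcup_sup j). Qed.

Lemma bigdprod_cent i j : i != j -> G i \subset 'C(G j).
Proof.
move=> neq_ij; have [_ _ cGK _] := dprodP (bigdprod_complP j).
exact: subset_trans (sub_bigdprod_compl neq_ij) cGK.
Qed.

Lemma bigdprod_coordM i : {in GG &, {morph bigdprod_coord i : x y / x * y}}.
Proof.
have defG_i := bigdprod_complP i; have [_ nsKG] := dprod_normal2 defG_i.
exact: remgrM (sdprod_compl (dprodWsdC defG_i)) nsKG.
Qed.

Definition bigdprod_coord_morphism i := Morphism (bigdprod_coordM i).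

Lemma bigdprod_coordJ i : {in GG &, forall x g,
  bigdprod_coord i (x ^ g) = bigdprod_coord i x ^ bigdprod_coord i g}.
Proof. exact: (morphJ (bigdprod_coord_morphism i)). Qed.

Lemma bigdprod_coord_id i x : x \in G i -> bigdprod_coord i x = x.
Proof.
have [_ _ _ tiGK] := dprodP (bigdprod_complP i).
by apply: remgr_id; rewrite setIC.
Qed.

Lemma bigdprod_coord1 i j x : j != i -> x \in G j -> bigdprod_coord i x = 1.
Proof.
by move=> neq_ji Gx; apply/remgr1/(subsetP (sub_bigdprod_compl neq_ji)).
Qed.

Lemma mem_bigdprod_coord i x : x \in GG -> bigdprod_coord i x \in G i.
Proof. by rewrite -(dprodWC (bigdprod_complP i)); apply: mem_remgr. Qed.

Lemma bigdprod_coord_prod (c : I -> gT) i :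
  (forall j, c j \in G j) -> bigdprod_coord i (\prod_j c j) = c i.
Proof.
move=> Gc; change (bigdprod_coord_morphism i (\prod_j c j) = c i).
rewrite morph_prod => [|j _]; last exact: subsetP (bigdprod_sub j) _ (Gc j).
rewrite (big_only1 i) //= ?bigdprod_coord_id // => j neq_ji _.
exact: bigdprod_coord1 neq_ji (Gc j).
Qed.

Lemma bigdprod_coordK x : x \in GG -> \prod_i bigdprod_coord i x = x.
Proof.
case/(mem_bigdprod defGG)=> c [Gc -> _].
by apply: eq_bigr => i _; apply: bigdprod_coord_prod => j; apply: Gc.
Qed.

Lemma bigdprod_coord_inj x y : x \in GG -> y \in GG ->
  (forall i, bigdprod_coord i x = bigdprod_coord i y) -> x = y.
Proof.
move=> Gx Gy eq_xy; rewrite -(bigdprod_coordK Gx) -(bigdprod_coordK Gy).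
by apply: eq_bigr => i _.
Qed.

Lemma bigdprod_coord_gen (A : I -> {group gT}) i z :
    (forall j, A j \subset G j) -> z \in <<\bigcup_j A j>> ->
  bigdprod_coord i z \in A i.
Proof.
move=> sAG; set f := bigdprod_coord_morphism i.
suff: <<\bigcup_j A j>> \subset f @*^-1 (A i).
  by move=> /subsetP/[apply]/morphpreP[].
rewrite gen_subG; apply/bigcupsP=> j _; apply/subsetP=> a Aa.
have Ga := subsetP (sAG j) a Aa.
apply: mem_morphpre; first exact: subsetP (bigdprod_sub j) a Ga.
have [eq_ji | neq_ji] := eqVneq j i.
  by subst j; rewrite /= bigdprod_coord_id.
by rewrite /= (bigdprod_coord1 neq_ji Ga).
Qed.

End BigdprodCoordinates.

Section ProductOfSemidirectProducts.

Variables (gT : finGroupType) (I : finType) (N H G : I -> {group gT}).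
Variables GG HH : {group gT}.
Hypothesis defG : forall i, N i ><| H i = G i.
Hypothesis defGG : \big[dprod/1]_i G i = GG.
Hypothesis defHH : \big[dprod/1]_i H i = HH.

Let NN := <<\bigcup_i N i>>%G.
Local Notation coord := (bigdprod_coord G).

Let sNG i : N i \subset G i.
Proof. by have [/normal_sub] := sdprod_context (defG i). Qed.

Let sHG i : H i \subset G i.
Proof. by have [] := sdprod_context (defG i). Qed.

Let sNNGG : NN \subset GG.
Proof.
rewrite gen_subG; apply/bigcupsP=> i _.
exact: subset_trans (sNG i) (bigdprod_sub defGG i).
Qed.

Let defHH_gen : <<\bigcup_i H i>> = HH.
Proof. exact: bigdprodWY defHH. Qed.

Let sHHGG : HH \subset GG.
Proof.
rewrite -defHH_gen gen_subG; apply/bigcupsP=> i _.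
exact: subset_trans (sHG i) (bigdprod_sub defGG i).
Qed.

Lemma bigdprod_sdprod : <<\bigcup_i N i>> ><| HH = GG.
Proof.
have nNNHH : HH \subset 'N(NN).
  rewrite -defHH_gen gen_subG; apply/bigcupsP=> i _.
  apply/norms_gen/norms_bigcup/bigcapsP=> j _.
  have [<- | neq_ij] := eqVneq i j; first by have [] := sdprod_context (defG i).
  apply: cents_norm; apply: subset_trans (sHG i) _.
  exact: subset_trans (bigdprod_cent defGG neq_ij) (centS (sNG j)).
have tiNNHH : NN :&: HH = 1.
  apply/trivgP/subsetP=> z /setIP[NNz HHz]; apply/set1gP.
  apply: (bigdprod_coord_inj defGG) => [||i]; rewrite ?group1 //.
    exact: subsetP sNNGG z NNz.
  rewrite (bigdprod_coord_id defGG (group1 _)); apply/set1gP.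
  have [_ _ _ _ <-] := sdprod_context (defG i).
  rewrite inE (bigdprod_coord_gen defGG _ sNG NNz).
  by rewrite (bigdprod_coord_gen defGG _ sHG) ?defHH_gen.
rewrite sdprodE //; apply/eqP; rewrite eqEsubset mul_subG //= -norm_joinEr //.
rewrite -(bigdprodWY defGG) gen_subG; apply/bigcupsP=> i _.
rewrite -(sdprodW (defG i)) mul_subG // -?defHH_gen.
  exact: subset_trans (sub_gen (bigcup_sup i _)) (joing_subl _ _).
exact: subset_trans (sub_gen (bigcup_sup i _)) (joing_subr _ _).
Qed.

Let tiNNHH : NN :&: HH = 1.
Proof. by have [] := sdprod_context bigdprod_sdprod. Qed.

Let nsNNGG : NN <| GG.
Proof. by have [] := sdprod_context bigdprod_sdprod. Qed.

Lemma bigdprod_coord_remgr i x : x \in GG ->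
  coord i (remgr <<\bigcup_i N i>> HH x) = remgr (N i) (H i) (coord i x).
Proof.
move=> GGx; have [_ _ _ _ tiNH] := sdprod_context (defG i).
have NNHHx : x \in NN * HH by rewrite (sdprodW bigdprod_sdprod).
have NNu := mem_divgr NNHHx.
have HHv : remgr NN HH x \in <<\bigcup_i H i>> by rewrite defHH_gen mem_remgr.
rewrite [in RHS](divgr_eq NN HH x) (bigdprod_coordM defGG); last 2 first.
- exact: subsetP sNNGG _ NNu.
- by rewrite (subsetP sHHGG) ?mem_remgr.
by rewrite remgrMid ?(bigdprod_coord_gen defGG _ sNG NNu)
           ?(bigdprod_coord_gen defGG _ sHG HHv).
Qed.

Hypothesis clN : forall i, (N i)^# \in classes (G i).
Hypothesis regH : forall i, {in (H i)^#, forall h, 'C_(N i)[h] = 1}.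

Lemma bigdprod_sdprod_class_eq_remgr x y :
    x \in GG -> y \in GG -> <<x ^: GG>> = <<y ^: GG>> ->
    remgr <<\bigcup_i N i>> HH x = remgr <<\bigcup_i N i>> HH y ->
  y \in x ^: GG.
Proof.
move=> GGx GGy eq_ncl eq_xy.
have conj_coord i : exists g, g \in G i /\ coord i y = coord i x ^ g.
  set f := bigdprod_coord_morphism defGG i.
  have /imsetP[g Gg ->] : coord i y \in coord i x ^: G i.
    apply: (sdprod_class_eq_remgr (defG i)).
    - exact: clN.
    - exact: regH.
    - exact: (mem_bigdprod_coord defGG).
    - exact: (mem_bigdprod_coord defGG).
    - by rewrite -!bigdprod_coord_remgr // eq_xy.
    have eq_ncl_i : <<f x ^: f @* GG>> = <<f y ^: f @* GG>>.
      by rewrite -!morphim_gen_class // eq_ncl.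
    by rewrite -!(gen_class_trivg (f @* GG)) eq_ncl_i.
  by exists g.
have [g conj_g] := fin_all_exists conj_coord.
have GGg : \prod_i g i \in GG.
  apply: group_prod => i _.
  exact: subsetP (bigdprod_sub defGG i) _ (conj_g i).1.
apply/imsetP; exists (\prod_i g i) => //.
apply: (bigdprod_coord_inj defGG) => [||i]; rewrite ?groupJ //.
rewrite (bigdprod_coordJ defGG) // (bigdprod_coord_prod defGG) => [|j].
  exact: (conj_g i).2.
exact: (conj_g j).1.
Qed.

Lemma bigdprod_sdprod_MP : MP HH -> MP GG.
Proof.
move=> mpH x y GGx GGy eq_ncl.
pose pi := Morphism (remgrM (sdprod_compl bigdprod_sdprod) nsNNGG).
have pi_id h (HHh : h \in HH) : pi h = h := remgr_id tiNNHH HHh.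
have [_ _ mulNNHH _ _] := sdprod_context bigdprod_sdprod.
have im_pi : pi @* GG = HH.
  apply/eqP; rewrite eqEsubset; apply/andP; split.
    apply/subsetP=> _ /morphimP[z _ GGz ->].
    by apply: mem_remgr; rewrite mulNNHH.
  apply/subsetP=> h HHh; apply/morphimP.
  by exists h; rewrite ?pi_id ?(subsetP sHHGG).
have HHpi z : z \in GG -> pi z \in HH by move=> GGz; rewrite -im_pi mem_morphim.
have eq_ncl_pi : <<pi x ^: HH>> = <<pi y ^: HH>>.
  by rewrite -im_pi -!morphim_gen_class // eq_ncl.
have [h HHh conj_h] := mpH _ _ (HHpi x GGx) (HHpi y GGy) eq_ncl_pi.
have GGh := subsetP sHHGG h HHh.
suff conj_xh z : z \in GG -> <<x ^: GG>> = <<z ^: GG>> -> pi x ^ h = pi z ->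
    exists2 g, g \in GG & x ^ g = z.
  have [eq_pi | eq_piV] := conj_h.
    by have [g GGg xg] := conj_xh y GGy eq_ncl eq_pi; exists g; last left.
  have [|||g GGg xg] := conj_xh y^-1; rewrite ?groupV ?gen_classV ?morphV //.
  by exists g; last right.
move=> GGz eq_ncl_z eq_pi.
have: z \in (x ^ h) ^: GG.
  apply: bigdprod_sdprod_class_eq_remgr => //; first by rewrite groupJ.
    by rewrite classGidl.
  by change (pi (x ^ h) = pi z); rewrite morphJ // (pi_id h HHh).
by case/imsetP=> g GGg ->; exists (h * g); rewrite ?groupM ?conjgM.
Qed.

End ProductOfSemidirectProducts.

Theorem proposition4p1 (gT : finGroupType) (n : nat)
  (N H G : 'I_n -> {group gT}) (GG HH : {group gT}) :
  0 < n ->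
  (forall i, N i ><| H i = G i) ->
  (forall i, N i :!=: 1) ->
  (forall i, (N i)^# \in classes (G i)) ->
  (forall i h, h \in (H i)^# -> 'C_(N i)[h] = 1) ->
  \big[dprod/1]_(i < n) G i = GG ->
  \big[dprod/1]_(i < n) H i = HH ->
  MP HH ->
  MP GG.
Proof.
move=> _ defG _ clN regH defGG defHH.
exact: bigdprod_sdprod_MP defG defGG defHH clN regH.
Qed.
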